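(* Let $M'$ be a $4m$-dimensional quaternionic space form of constant quaternionic sectional curvature $4c$ endowed with a Ricci quarter-symmetric metric connection (setting as in the context), and let $N'$ be an $n$-dimensional submanifold. Then for each $p\in N'$ and each unit vector $X\in T_pN'$, taking an orthonormal basis $\{e_1=X,e_2,\dots,e_n\}$ of $T_pN'$, the Ricci curvature $\mathrm{Ric}(X)=\sum_{j=2}^n g(R(e_1,e_j)e_j,e_1)$ satisfies $$\mathrm{Ric}(X)\le c\Big\{(n-1)+3\sum_{k=1}^{3}\sum_{j=2}^{n}g^2(\psi_kX,e_j)\Big\}-c\Big\{(n-1)+3\sum_{k=1}^{3}\frac{\|P_k\|^2}{n}\Big\}\big[\operatorname{tr}M+(n-2)M(X,X)\big]+\frac{n^2\|H\|^2}{4}.$$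
   Context: Let $(M',g)$ be a $4m$-dimensional quaternionic Kaehler manifold with local almost Hermitian structures $\psi_1,\psi_2,\psi_3$ ($\psi_i^2=-I$, $\psi_1\psi_2=\psi_3=-\psi_2\psi_1$ and cyclically) which is a quaternionic space form of constant quaternionic sectional curvature $4c$, i.e. its Levi-Civita connection $\nabla^*$ has curvature $R^*(X,Y)Z=c\{g(Y,Z)X-g(X,Z)Y+\sum_{i=1}^3(g(\psi_iY,Z)\psi_iX-g(\psi_iX,Z)\psi_iY-2g(\psi_iX,Y)\psi_iZ)\}$. $M'$ carries the Ricci quarter-symmetric metric connection $\nabla''_XY=\nabla^*_XY+\eta(Y)LX-S(X,Y)P$, where $S$ is the Ricci tensor of $\nabla^*$, $L$ is the $(1,1)$-tensor with $g(LX,Y)=S(X,Y)$, $\eta$ is a 1-form and $P$ the unit vector field with $g(P,X)=\eta(X)$. Put $QX=\nabla^*_XP-\eta(LX)P+\tfrac12\eta(P)LX$ and $M(X,Y)=g(QX,Y)$. $N'$ is an $n$-dimensional submanifold with induced connection $\nabla$ (curvature $R$) and second fundamental form $h$; $\{e_1,\dots,e_n\}$ and $\{e_{n+1},\dots,e_{4m}\}$ are orthonormal bases of $T_pN'$ and $T_p^\perp N'$. Write $\psi_kX=P_kX+F_kX$ (tangential and normal parts), $\|P_k\|^2=\sum_{i,j=1}^n g(P_ke_i,e_j)^2$, and $\operatorname{tr}M=\sum_{i=1}^n M(e_i,e_i)$ (denoted $m$ in the paper). Following the paper's standing assumption $S=(\tau'/n)g$, the curvature of $\nabla''$ is $R''(X,Y)Z=R^*(X,Y)Z-\frac{\tau'}{n}\{M(Y,Z)X-M(X,Z)Y+g(Y,Z)QX-g(X,Z)QY\}$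 with $\tau'=c\{n(n-1)+3\sum_{k=1}^3\|P_k\|^2\}$, and the Gauss equation $g(R''(X,Y)Z,W)=g(R(X,Y)Z,W)+g(h(X,Z),h(Y,W))-g(h(X,W),h(Y,Z))$ holds for tangent $X,Y,Z,W$. The mean curvature vector is $H=\frac1n\sum_{i=1}^n h(e_i,e_i)$. *)

(* pointwise (linear-algebraic) model at a point p of N'. *)
From HB Require Import structures.
From mathcomp Require Import all_boot all_order all_algebra.
Set Implicit Arguments. Unset Strict Implicit. Unset Printing Implicit Defensive.
Import Order.TTheory GRing.Theory Num.Theory.
Local Open Scope ring_scope.

(* T_p M' is modelled as column vectors 'cV[R]_N (N = 4m) with the metric g
   given by the standard inner product. *)
Definition g {R : realFieldType} {N : nat} (u v : 'cV[R]_N) : R := (u^T *m v) 0 0.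

Definition q1 : 'I_3 := @Ordinal 3 0 isT.
Definition q2 : 'I_3 := @Ordinal 3 1 isT.
Definition q3 : 'I_3 := @Ordinal 3 2 isT.

Section Defs.
Context {R : realFieldType} {N : nat}.
Local Notation V := 'cV[R]_N.

(* curvature of the quaternionic space form of constant q-sectional curv. 4c *)
Definition Rstar (c : R) (psi : 'I_3 -> 'M[R]_N) (X Y Z : V) : V :=
  c *: (g Y Z *: X - g X Z *: Y +
        \sum_(k < 3) (g (psi k *m Y) Z *: (psi k *m X)
                      - g (psi k *m X) Z *: (psi k *m Y)
                      - (2 * g (psi k *m X) Y) *: (psi k *m Z))).

Definition normP2 {n : nat} (e : 'I_n -> V) (A : 'M[R]_N) : R :=
  \sum_(i < n) \sum_(j < n) (g (A *m e i) (e j)) ^+ 2.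

Definition tauP {n : nat} (c : R) (psi : 'I_3 -> 'M[R]_N) (e : 'I_n -> V) : R :=
  c * (n%:R * (n%:R - 1) + 3 * \sum_(k < 3) normP2 e (psi k)).

Definition Mf (Q : 'M[R]_N) (X Y : V) : R := g (Q *m X) Y.

(* curvature of the Ricci quarter-symmetric metric connection *)
Definition Rpp {n : nat} (c : R) (psi : 'I_3 -> 'M[R]_N) (Q : 'M[R]_N)
    (e : 'I_n -> V) (X Y Z : V) : V :=
  Rstar c psi X Y Z -
  (tauP c psi e / n%:R) *: (Mf Q Y Z *: X - Mf Q X Z *: Y
                           + g Y Z *: (Q *m X) - g X Z *: (Q *m Y)).

(* tangent vectors at p: the span of the orthonormal frame e of T_pN' *)
Definition tangent {n : nat} (e : 'I_n -> V) (X : V) : Prop :=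
  exists a : 'I_n -> R, X = \sum_(i < n) a i *: e i.

Definition meanH {n : nat} (h : V -> V -> V) (e : 'I_n -> V) : V :=
  n%:R^-1 *: \sum_(i < n) h (e i) (e i).

Definition trM {n : nat} (Q : 'M[R]_N) (e : 'I_n -> V) : R :=
  \sum_(i < n) Mf Q (e i) (e i).

End Defs.

From HB Require Import structures.
From mathcomp Require Import all_boot all_order all_algebra.
From mathcomp Require Import ring lra.
Import Order.TTheory GRing.Theory Num.Theory.
Local Open Scope ring_scope.

(* Since each psi_k is g-skew, the space form curvature of the plane spanned
   by the orthonormal pair X = e_i0, e_j is c (1 + 3 sum_k g(psi_k X, e_j)^2),
   and the Ricci quarter-symmetric correction contributes
   -(tau'/n) (M(e_j,e_j) + M(X,X)).  Summing the Gauss equation over j <> i0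
   and dropping the squares |h(X,e_j)|^2 leaves the cross term
   g(a, b) with a = h(X,X), b = sum_(j <> i0) h(e_j,e_j); since a + b = n H,
   the inequality 4 g(a,b) <= |a + b|^2 finishes the proof. *)

Section InnerProduct.
Context {R : realFieldType} {N : nat}.
Implicit Types (u v w : 'cV[R]_N) (a : R).

Lemma gE u v : g u v = \sum_i u i 0 * v i 0.
Proof. by rewrite /g !mxE; apply: eq_bigr => i _; rewrite !mxE. Qed.

Lemma gC u v : g u v = g v u.
Proof. by rewrite !gE; apply: eq_bigr => i _; rewrite mulrC. Qed.

Lemma gDl u v w : g (u + v) w = g u w + g v w.
Proof. by rewrite !gE -big_split; apply: eq_bigr => i _; rewrite !mxE mulrDl. Qed.

Lemma gDr u v w : g w (u + v) = g w u + g w v.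
Proof. by rewrite !(gC w) gDl. Qed.

Lemma gZl a u w : g (a *: u) w = a * g u w.
Proof. by rewrite !gE mulr_sumr; apply: eq_bigr => i _; rewrite !mxE mulrA. Qed.

Lemma gZr a u w : g w (a *: u) = a * g w u.
Proof. by rewrite !(gC w) gZl. Qed.

Lemma gNl u w : g (- u) w = - g u w.
Proof. by rewrite -scaleN1r gZl mulN1r. Qed.

Lemma gNr u w : g w (- u) = - g w u.
Proof. by rewrite !(gC w) gNl. Qed.

Lemma gBl u v w : g (u - v) w = g u w - g v w.
Proof. by rewrite gDl gNl. Qed.

Lemma gsuml (I : Type) (r : seq I) (P : pred I) (F : I -> 'cV[R]_N) w :
  g (\sum_(j <- r | P j) F j) w = \sum_(j <- r | P j) g (F j) w.
Proof.
apply: (big_rec2 (fun x y => g x w = y)) => [|j x y _ <-]; last exact: gDl.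
by rewrite -(scale0r 0) gZl mul0r.
Qed.

Lemma gsumr (I : Type) (r : seq I) (P : pred I) (F : I -> 'cV[R]_N) w :
  g w (\sum_(j <- r | P j) F j) = \sum_(j <- r | P j) g w (F j).
Proof. by rewrite gC gsuml; apply: eq_bigr => j _; rewrite gC. Qed.

Lemma g_ge0 u : 0 <= g u u.
Proof. by rewrite gE; apply: sumr_ge0 => i _; rewrite -expr2 sqr_ge0. Qed.

Lemma g_le_sqr_addr u v : g u v <= g (u + v) (u + v) / 4.
Proof.
have := g_ge0 (u - v); rewrite !(gDl, gDr, gNl, gNr) opprK (gC v u).
by move: (g u u) (g u v) (g v v) => x y z; lra.
Qed.

Lemma g_skew (A : 'M[R]_N) :
    A *m A = - 1%:M -> (forall u v, g (A *m u) (A *m v) = g u v) ->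
  forall u v, g (A *m u) v = - g u (A *m v).
Proof.
move=> A2 A_isometry u v.
by rewrite -[LHS]A_isometry mulmxA A2 mulNmx mul1mx gNl.
Qed.

End InnerProduct.

Section SpaceFormCurvature.
Context {R : realFieldType} {N : nat}.
Variables (c : R) (psi : 'I_3 -> 'M[R]_N).
Hypothesis psi_skew : forall k u v, g (psi k *m u) v = - g u (psi k *m v).

Lemma gRstar (X Y Z W : 'cV[R]_N) : g (Rstar c psi X Y Z) W =
  c * (g Y Z * g X W - g X Z * g Y W +
   \sum_(k < 3) (g (psi k *m Y) Z * g (psi k *m X) W
                 - g (psi k *m X) Z * g (psi k *m Y) W
                 - 2 * g (psi k *m X) Y * g (psi k *m Z) W)).
Proof.
rewrite /Rstar gZl gDl gsuml gBl !gZl; congr (_ * (_ + _)).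
by apply: eq_bigr => k _; rewrite !gBl !gZl.
Qed.

Lemma gRpp n (Q : 'M[R]_N) (e : 'I_n -> 'cV[R]_N) (X Y Z W : 'cV[R]_N) :
  g (Rpp c psi Q e X Y Z) W =
  g (Rstar c psi X Y Z) W - tauP c psi e / n%:R *
   (Mf Q Y Z * g X W - Mf Q X Z * g Y W + g Y Z * g (Q *m X) W - g X Z * g (Q *m Y) W).
Proof. by rewrite /Rpp gBl gZl !(gBl, gDl, gZl). Qed.

Lemma psi_g_self k u : g (psi k *m u) u = 0.
Proof. by have := psi_skew k u u; rewrite (gC u); lra. Qed.

Lemma Rstar_sectional (X Y : 'cV[R]_N) :
    g X X = 1 -> g Y Y = 1 -> g X Y = 0 ->
  g (Rstar c psi X Y Y) X = c * (1 + 3 * \sum_(k < 3) g (psi k *m X) Y ^+ 2).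
Proof.
move=> X1 Y1 XY0; rewrite gRstar X1 Y1 (gC Y X) XY0 mulr_sumr.
congr (c * (_ + _)); first by rewrite mul1r mul0r subr0.
by apply: eq_bigr => k _; rewrite psi_g_self (psi_skew k Y) (gC Y); ring.
Qed.

Lemma Rpp_sectional n (Q : 'M[R]_N) (e : 'I_n -> 'cV[R]_N) (X Y : 'cV[R]_N) :
    g X X = 1 -> g Y Y = 1 -> g X Y = 0 ->
  g (Rpp c psi Q e X Y Y) X =
    c * (1 + 3 * \sum_(k < 3) g (psi k *m X) Y ^+ 2)
    - tauP c psi e / n%:R * (Mf Q Y Y + Mf Q X X).
Proof.
move=> X1 Y1 XY0; rewrite gRpp Rstar_sectional // X1 Y1 (gC Y X) XY0.
by rewrite /Mf; congr (_ - _ * _); ring.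
Qed.

End SpaceFormCurvature.

Section Submanifold.
Context {R : realFieldType} {N n : nat}.
Context {c : R} {psi : 'I_3 -> 'M[R]_N} {Q : 'M[R]_N} {e : 'I_n -> 'cV[R]_N}.
Context {Rc : 'cV[R]_N -> 'cV[R]_N -> 'cV[R]_N -> 'cV[R]_N}
        {h : 'cV[R]_N -> 'cV[R]_N -> 'cV[R]_N}.
Hypothesis psi_skew : forall k u v, g (psi k *m u) v = - g u (psi k *m v).
Hypothesis e_orthonormal : forall i j, g (e i) (e j) = (i == j)%:R.
Hypothesis h_sym : forall {X Y}, tangent e X -> tangent e Y -> h X Y = h Y X.
Hypothesis gauss : forall {X Y Z W},
  tangent e X -> tangent e Y -> tangent e Z -> tangent e W ->
  g (Rpp c psi Q e X Y Z) W = g (Rc X Y Z) W + g (h X Z) (h Y W) - g (h X W) (h Y Z).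

Let t := tauP c psi e / n%:R.

Lemma tangent_frame i : tangent e (e i).
Proof.
exists (fun j => (j == i)%:R); rewrite (bigD1 i) //= eqxx scale1r big1 ?addr0 //.
by move=> j /negbTE ->; rewrite scale0r.
Qed.

Lemma gauss_sectional i j : j != i ->
  g (Rc (e i) (e j) (e j)) (e i) =
    c * (1 + 3 * \sum_(k < 3) g (psi k *m e i) (e j) ^+ 2)
    - t * (Mf Q (e j) (e j) + Mf Q (e i) (e i))
    - g (h (e i) (e j)) (h (e i) (e j)) + g (h (e i) (e i)) (h (e j) (e j)).
Proof.
move=> ji; have eij : (i == j) = false by rewrite eq_sym (negbTE ji).
have := gauss (tangent_frame i) (tangent_frame j) (tangent_frame j) (tangent_frame i).
rewrite (Rpp_sectional _ _ psi_skew) ?e_orthonormal ?eqxx ?eij //.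
by rewrite (h_sym (tangent_frame j) (tangent_frame i)) => ->; rewrite /t; ring.
Qed.

Lemma sum_neq_const (i0 : 'I_n) (x : R) :
  \sum_(j < n | j != i0) x = (n%:R - 1) * x.
Proof.
have : \sum_(j < n) x = x + \sum_(j < n | j != i0) x by rewrite (bigD1 i0).
by rewrite sumr_const card_ord -mulr_natl; lra.
Qed.

Lemma ricci_le_gauss (i0 : 'I_n) :
  \sum_(j < n | j != i0) g (Rc (e i0) (e j) (e j)) (e i0) <=
    c * ((n%:R - 1)
         + 3 * \sum_(k < 3) \sum_(j < n | j != i0) g (psi k *m e i0) (e j) ^+ 2)
    - t * (\sum_(j < n | j != i0) Mf Q (e j) (e j) + (n%:R - 1) * Mf Q (e i0) (e i0))
    + g (h (e i0) (e i0)) (\sum_(j < n | j != i0) h (e j) (e j)).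
Proof.
rewrite (eq_bigr _ (@gauss_sectional i0)) gsumr !big_split /= sumrN.
rewrite -!mulr_sumr !big_split /= !sum_neq_const mulr1 -mulr_sumr exchange_big.
rewrite lerD2r gerDl; apply: sumr_le0 => j _.
by rewrite oppr_le0 g_ge0.
Qed.

End Submanifold.

Lemma tauP_divn {R : realFieldType} {N n : nat} (c : R) (psi : 'I_3 -> 'M[R]_N)
    (e : 'I_n -> 'cV[R]_N) : (0 < n)%N ->
  tauP c psi e / n%:R =
    c * ((n%:R - 1) + 3 * \sum_(k < 3) normP2 e (psi k) / n%:R).
Proof.
rewrite -(ltr0n R) => /lt0r_neq0; rewrite /tauP -mulr_suml.
by move: (n%:R) (\sum_(k < 3) _) => x y x_neq0; field.
Qed.

Lemma sqr_n_g_meanH {R : realFieldType} {N n : nat}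
    (h : 'cV[R]_N -> 'cV[R]_N -> 'cV[R]_N) (e : 'I_n -> 'cV[R]_N) : (0 < n)%N ->
  n%:R ^+ 2 * g (meanH h e) (meanH h e) =
    g (\sum_(i < n) h (e i) (e i)) (\sum_(i < n) h (e i) (e i)).
Proof.
rewrite -(ltr0n R) => /lt0r_neq0; rewrite /meanH gZl gZr.
by move: (n%:R) (g _ _) => x y x_neq0; field.
Qed.

Theorem theorem2 (R : realFieldType) (m n : nat) (c : R)
    (psi : 'I_3 -> 'M[R]_(4 * m)) (Q : 'M[R]_(4 * m))
    (e : 'I_n -> 'cV[R]_(4 * m))
    (Rc : 'cV[R]_(4 * m) -> 'cV[R]_(4 * m) -> 'cV[R]_(4 * m) -> 'cV[R]_(4 * m))
    (h : 'cV[R]_(4 * m) -> 'cV[R]_(4 * m) -> 'cV[R]_(4 * m))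
    (i0 : 'I_n)
    (* local almost Hermitian quaternionic structure *)
    (Hsq : forall k, psi k *m psi k = - 1%:M)
    (H12 : psi q1 *m psi q2 = psi q3) (H21 : psi q2 *m psi q1 = - psi q3)
    (H23 : psi q2 *m psi q3 = psi q1) (H32 : psi q3 *m psi q2 = - psi q1)
    (H31 : psi q3 *m psi q1 = psi q2) (H13 : psi q1 *m psi q3 = - psi q2)
    (Hherm : forall k X Y, g (psi k *m X) (psi k *m Y) = g X Y)
    (* {e_i} orthonormal basis of T_pN' *)
    (Horth : forall i j, g (e i) (e j) = (i == j)%:R)
    (* second fundamental form: bilinear, symmetric, normal-valued *)
    (Hh_l : forall a X Y Z, tangent e X -> tangent e Y -> tangent e Z ->
        h (a *: X + Y) Z = a *: h X Z + h Y Z)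
    (Hh_sym : forall X Y, tangent e X -> tangent e Y -> h X Y = h Y X)
    (Hh_nor : forall X Y i, tangent e X -> tangent e Y -> g (h X Y) (e i) = 0)
    (* Gauss equation *)
    (Hgauss : forall X Y Z W, tangent e X -> tangent e Y -> tangent e Z -> tangent e W ->
        g (Rpp c psi Q e X Y Z) W = g (Rc X Y Z) W + g (h X Z) (h Y W) - g (h X W) (h Y Z)) :
  let X := e i0 in
  \sum_(j < n | j != i0) g (Rc X (e j) (e j)) X <=
    c * ((n%:R - 1) + 3 * \sum_(k < 3) \sum_(j < n | j != i0) (g (psi k *m X) (e j)) ^+ 2)
    - c * ((n%:R - 1) + 3 * \sum_(k < 3) normP2 e (psi k) / n%:R)
        * (trM Q e + (n%:R - 2) * Mf Q X X)
    + (n%:R ^+ 2 * g (meanH h e) (meanH h e)) / 4.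
Proof.
cbv zeta; set X := e i0.
have n_gt0 : (0 < n)%N := leq_ltn_trans (leq0n _) (ltn_ord i0).
have psi_skew k := g_skew _ (Hsq k) (Hherm k).
apply: le_trans (ricci_le_gauss psi_skew Horth Hh_sym Hgauss i0) _.
rewrite tauP_divn // sqr_n_g_meanH // /trM.
rewrite (bigD1 i0 (P := predT)) //= (bigD1 i0 (P := predT)) //=.
have := g_le_sqr_addr (h X X) (\sum_(j < n | j != i0) h (e j) (e j)).
lra.
Qed.
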